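(* Let $\|\cdot\|$ be a norm on $\mathbb{R}^d$, let $\Phi$ be a mirror map whose Bregman divergence satisfies $\frac{m}{2}\|x-y\|^2\le D_\Phi(x,y)\le\frac{M}{2}\|x-y\|^2$ for constants $0<m\le M$, let $f_t$ be a convex function and $x_{t-1}$ a point. For each $l$ with $K_l=\{x: f_t(x)\le l\}$ nonempty, let $x(l)=\Pi^\Phi_{K_l}(x_{t-1})$. Then the function $g(l)=\|x(l)-x_{t-1}\|$ is continuous in $l$.
   Context: For a convex function $\Phi$, the Bregman divergence is $D_\Phi(x,y)=\Phi(x)-\Phi(y)-\nabla\Phi(y)^T(x-y)$, and the Bregman projection of $x$ onto a convex set $K$ is $\Pi^\Phi_K(x)=\arg\min_{y\in K}D_\Phi(y,x)$. *)

From HB Require Import structures.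
From mathcomp Require Import all_boot all_order all_algebra.
From mathcomp Require Import all_classical all_reals all_analysis.
Set Implicit Arguments. Unset Strict Implicit. Unset Printing Implicit Defensive.
Import Order.TTheory GRing.Theory Num.Theory.
Import numFieldNormedType.Exports.
Local Open Scope classical_set_scope.
Local Open Scope ring_scope.

Definition is_norm (R : realType) (d : nat) (N : 'rV[R]_d -> R) : Prop :=
  [/\ (forall x, 0 <= N x),
      (forall x, N x = 0 -> x = 0),
      (forall (a : R) x, N (a *: x) = `|a| * N x) &
      (forall x y, N (x + y) <= N x + N y)].

Definition convex_fun (R : realType) (d : nat) (f : 'rV[R]_d -> R) : Prop :=
  forall (x y : 'rV[R]_d) (t : R), 0 <= t -> t <= 1 ->
    f (t *: x + (1 - t) *: y) <= t * f x + (1 - t) * f y.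

(* Bregman divergence D_Phi(x,y) = Phi x - Phi y - <grad Phi(y), x - y>;
   the last term is the directional derivative of Phi at y along x - y. *)
Definition bregman (R : realType) (d : nat) (Phi : 'rV[R]_d -> R)
    (x y : 'rV[R]_d) : R :=
  Phi x - Phi y - 'D_(x - y) Phi y.

Definition is_bregman_proj (R : realType) (d : nat) (Phi : 'rV[R]_d -> R)
    (K : set 'rV[R]_d) (x p : 'rV[R]_d) : Prop :=
  K p /\ forall y, K y -> bregman Phi p x <= bregman Phi y x.

(* The Bregman projection Pi^Phi_K(x) (a chosen minimizer; unique when it exists
   under the hypotheses of the theorem). *)
Definition bregman_proj (R : realType) (d : nat) (Phi : 'rV[R]_d -> R)
    (K : set 'rV[R]_d) (x : 'rV[R]_d) : 'rV[R]_d :=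
  xget 0 [set p | is_bregman_proj Phi K x p].

Definition sublevel (R : realType) (d : nat) (f : 'rV[R]_d -> R) (l : R)
  : set 'rV[R]_d := [set x | f x <= l].

From HB Require Import structures.
From mathcomp Require Import all_boot all_order all_algebra.
From mathcomp Require Import all_classical all_reals all_analysis.
From mathcomp Require Import ring lra.
Import Order.TTheory GRing.Theory Num.Theory.
Import numFieldNormedType.Exports.
Local Open Scope classical_set_scope.
Local Open Scope ring_scope.

(* Let [G y = D_Phi(y, x0)] and [v l = min_{K_l} G].  The lower bound on [D_Phi]
   makes [G] strongly convex, so the minimizers over the nested convex sets
   [K_l <= K_l'] satisfy [m/4 N(x(l) - x(l'))^2 <= v l - v l'], and continuity
   of [g] reduces to continuity of [v].  Convexity of [v] in [l] gives continuity
   from the left; continuity from the right follows from the compactness of the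
   sublevel sets of [G] (all norms on R^d being equivalent) and the continuity
   of the convex function [f]. *)

Lemma mx_norm_coord_le {R : realType} {m n} (x : 'M[R]_(m, n)) i j :
  `|x i j| <= `|x|.
Proof.
have /mapP[k _ ->] : `|x i j| \in [seq `|x k.1 k.2| | k : 'I_m * 'I_n].
  by apply/mapP; exists (i, j) => //=; rewrite mem_enum.
by rewrite (_ : `|x| = mx_norm x) // mx_normrE; apply/bigmax_geP; right => /=; exists k.
Qed.

Lemma bounded_set_le {R : realType} {V : normedModType R} {A : set V} (B : R) :
  (forall x, A x -> `|x| <= B) -> bounded_set A.
Proof.
move=> AB; exists B; split; first exact: num_real.
by move=> M BM x /AB xB; exact: le_trans xB (ltW BM).
Qed.

Lemma lipschitz_near_continuous {R : realType} {V : normedModType R}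
    {g : V -> R} {x : V} {C : R} :
  0 < C -> (\forall y \near x, `|g x - g y| <= C * `|x - y|) ->
  {for x, continuous g}.
Proof.
move=> C_gt0 gC; apply/cvgrPdist_le => e e_gt0.
have xe : \forall y \near x, `|x - y| < e / C.
  exact: (nbhs_ball_norm x (PosNum (divr_gt0 e_gt0 C_gt0))).
near=> y; apply: le_trans (_ : C * `|x - y| <= e); first by near: y.
by rewrite -ler_pdivlMl // mulrC ltW //; near: y.
Unshelve. all: by end_near. Qed.

Lemma within_continuous_eps_delta {R : realType} (A : set R) (g : R -> R) :
  (forall l0, A l0 -> forall e, 0 < e -> exists2 delta, 0 < delta &
     forall l, A l -> `|l - l0| < delta -> `|g l - g l0| <= e) ->
  {within A, continuous g}.
Proof.
move=> gA; rewrite continuous_subspace_in => l0 /set_mem Al0.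
apply/cvgrPdist_le => e e_gt0; rewrite -nbhs_subspace_in //.
have [delta delta_gt0 gl0] := gA l0 Al0 e e_gt0.
by exists delta => //= l l0l Al; rewrite distrC gl0 // distrC.
Qed.

Section is_norm_rV.
Context {R : realType} {d : nat} {N : 'rV[R]_d -> R} (normN : is_norm N).

Lemma is_norm_ge0 x : 0 <= N x. Proof. by case: normN. Qed.

Lemma is_norm_eq0 x : N x = 0 -> x = 0. Proof. by case: normN => _ + _ _; apply. Qed.

Lemma is_normZ a x : N (a *: x) = `|a| * N x. Proof. by case: normN. Qed.

Lemma is_normD x y : N (x + y) <= N x + N y. Proof. by case: normN. Qed.

Lemma is_norm0 : N 0 = 0.
Proof. by rewrite -(scale0r 0) is_normZ normr0 mul0r. Qed.

Lemma is_normN x : N (- x) = N x.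
Proof. by rewrite -scaleN1r is_normZ normrN1 mul1r. Qed.

Lemma is_normB x y : N (x - y) = N (y - x).
Proof. by rewrite -opprB is_normN. Qed.

Lemma is_norm_dist x y : `|N x - N y| <= N (x - y).
Proof.
have := is_normD (x - y) y; have := is_normD (y - x) x.
rewrite !subrK is_normB ler_norml; move=> ? ?; apply/andP; split; lra.
Qed.

Lemma is_norm_sum {n} (F : 'I_n -> 'rV[R]_d) :
  N (\sum_(i < n) F i) <= \sum_(i < n) N (F i).
Proof.
elim/big_ind2 : _ => [|a b x y ab xy|//]; first by rewrite is_norm0.
exact: le_trans (is_normD _ _) (lerD ab xy).
Qed.

Lemma is_norm_le_mx_norm : exists2 C, 0 < C & forall x, N x <= C * `|x|.
Proof.
exists (\sum_(i < d) N (delta_mx 0 i) + 1).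
  by rewrite ltr_wpDl // sumr_ge0 // => i _; exact: is_norm_ge0.
move=> x; rewrite {1}(row_sum_delta x).
apply: le_trans (is_norm_sum (fun j => x 0 j *: delta_mx 0 j)) _.
rewrite mulrDl mul1r ler_wpDr // mulr_suml; apply: ler_sum => i _.
by rewrite is_normZ mulrC ler_wpM2l ?is_norm_ge0 ?mx_norm_coord_le.
Qed.

Lemma is_norm_continuous : continuous N.
Proof.
have [C C_gt0 NC] := is_norm_le_mx_norm.
move=> x; apply: (lipschitz_near_continuous C_gt0); near=> y.
exact: le_trans (is_norm_dist x y) (NC _).
Unshelve. all: by end_near. Qed.

Lemma is_norm_ge_mx_norm : exists2 c, 0 < c & forall x, c * `|x| <= N x.
Proof.
pose S := [set x : 'rV[R]_d | `|x| = 1].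
have normalize x : x != 0 -> S (`|x|^-1 *: x) by move=> x0; rewrite /S /= normfZV.
have [[y Sy]|S0] := pselect (S !=set0); last first.
  exists 1 => // x; have [->|x0] := eqVneq x 0; first by rewrite normr0 mulr0 is_norm0.
  by exfalso; apply: S0; exists (`|x|^-1 *: x); exact: normalize.
have S_compact : compact S.
  apply: bounded_closed_compact; first by apply: (bounded_set_le 1) => x ->.
  apply: (@preimage_closed _ _ (fun x : 'rV[R]_d => `|x|) [set r | r = 1]).
    by move=> x _; exact: norm_continuous.
  exact: closed_eq.
have [c /set_mem Sc minc] := EVT_min_rV (ex_intro _ y Sy) S_compact
  (continuous_subspaceT is_norm_continuous).
have c0 : c != 0 by rewrite -normr_eq0 (Sc : `|c| = 1) oner_eq0.
exists (N c).
  by rewrite lt_def is_norm_ge0 andbT; apply: contraNneq c0 => /is_norm_eq0 ->.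
move=> x; have [->|x0] := eqVneq x 0; first by rewrite normr0 mulr0 is_norm0.
have := minc _ (mem_set (normalize _ x0)); rewrite is_normZ ger0_norm ?invr_ge0 //.
by rewrite ler_pdivlMl ?normr_gt0 // mulrC.
Qed.

End is_norm_rV.

Lemma quadratic_growth_sublevel_compact {R : realType} {d : nat}
    {N G : 'rV[R]_d -> R} {x : 'rV[R]_d} {k : R} :
  is_norm N -> 0 < k -> continuous G ->
  (forall y, k * N (y - x) ^+ 2 <= G y) -> forall c, compact [set y | G y <= c].
Proof.
move=> normN k_gt0 G_cont Gk c; have [a a_gt0 aN] := is_norm_ge_mx_norm normN.
apply: bounded_closed_compact.
  apply: (bounded_set_le (`|x| + (1 + c / k) / a)) => y Gyc.
  have Nyx : N (y - x) <= 1 + c / k.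
    have := is_norm_ge0 normN (y - x).
    have : N (y - x) ^+ 2 <= c / k.
      by rewrite ler_pdivlMr // mulrC (le_trans (Gk y) Gyc).
    nra.
  apply: le_trans (_ : `|x| + `|y - x| <= _).
    by rewrite -{1}(subrKC x y) ler_normD.
  by rewrite lerD2l ler_pdivlMr // mulrC (le_trans (aN _) Nyx).
apply: (@preimage_closed _ _ G [set r | r <= c]); last exact: closed_le.
by move=> y _; exact: G_cont.
Qed.

Lemma sublevel_closed {R : realType} {d : nat} {f : 'rV[R]_d -> R} (l : R) :
  continuous f -> closed (sublevel f l).
Proof.
move=> f_cont; apply: (@preimage_closed _ _ f [set r | r <= l]); last exact: closed_le.
by move=> x _; exact: f_cont.
Qed.

Section convex_fun_rV.
Context {R : realType} {d : nat} {f : 'rV[R]_d -> R} (f_convex : convex_fun f).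

Lemma convex_fun_le {a b t la lb} : 0 <= t -> t <= 1 -> f a <= la -> f b <= lb ->
  f (t *: a + (1 - t) *: b) <= t * la + (1 - t) * lb.
Proof.
move=> t0 t1 fa fb; apply: le_trans (f_convex a b t t0 t1) _.
by apply: lerD; apply: ler_wpM2l; rewrite ?subr_ge0.
Qed.

Lemma convex_fun_midpoint_le {a b l} : f a <= l -> f b <= l -> f (2^-1 *: (a + b)) <= l.
Proof.
move=> fa fb; have -> : 2^-1 *: (a + b) = 2^-1 *: a + (1 - 2^-1) *: b.
  by apply/matrixP => i j; rewrite !mxE; field.
have half_ge0 : (0 : R) <= 2^-1 by rewrite invr_ge0.
have half_le1 : (2^-1 : R) <= 1 by rewrite invf_le1 // ler1n.
by have := convex_fun_le half_ge0 half_le1 fa fb; rewrite -mulrDl subrKC mul1r.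
Qed.

Definition cube_vertex (s : {ffun 'I_d -> bool}) : 'rV[R]_d :=
  \row_i (if s i then 1 else -1).

Definition row_set (y : 'rV[R]_d) (i : 'I_d) (a : R) : 'rV[R]_d :=
  \row_j (if j == i then a else y 0 j).

Lemma row_set_convex (x y : 'rV[R]_d) i :
  x + y = (1 + y 0 i) / 2 *: (x + row_set y i 1)
          + (1 - (1 + y 0 i) / 2) *: (x + row_set y i (-1)).
Proof.
by apply/matrixP => a b; rewrite !mxE (ord1 a); case: eqP => [->|_]; field.
Qed.

Lemma convex_fun_cube_bounded (x : 'rV[R]_d) :
  exists U, forall y : 'rV[R]_d, (forall i, `|y 0 i| <= 1) -> f (x + y) <= U.
Proof.
pose U := \sum_s `|f (x + cube_vertex s)|; exists U.
(* Induction on the number of coordinates not yet pushed to a vertex value [1] or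
   [-1]: fixing one more coordinate writes the point as a convex combination. *)
suff bound k (y : 'rV[R]_d) : (forall i, `|y 0 i| <= 1) ->
    (forall i : 'I_d, (k <= i)%N -> `|y 0 i| = 1) -> f (x + y) <= U.
  by move=> y y1; apply: (bound d) => // i; rewrite leqNgt ltn_ord.
elim: k y => [|k IH] y y1 yk.
  have -> : y = cube_vertex [ffun i => y 0 i == 1].
    apply/matrixP => a b; rewrite !mxE ffunE (ord1 a).
    move: (yk b isT) => /eqP; rewrite eqr_norml => /andP[/orP[]/eqP-> _].
      by rewrite eqxx.
    by case: eqP.
  apply: le_trans (ler_norm _) _.
  by rewrite /U (bigD1 [ffun i => y 0 i == 1]) //= lerDl sumr_ge0.
have [kd|dk] := ltnP k d; last first.
  by apply: IH => // i ki; move: (ltn_ord i); rewrite ltnNge (leq_trans dk ki).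
pose i := Ordinal kd.
have := y1 i; rewrite ler_norml => /andP[yi_ge yi_le].
have set_box a : `|a| = 1 -> forall j, `|row_set y i a 0 j| <= 1.
  by move=> a1 j; rewrite mxE; case: eqP => _; rewrite ?a1.
have set_vertex a : `|a| = 1 -> forall j : 'I_d, (k <= j)%N -> `|row_set y i a 0 j| = 1.
  move=> a1 j kj; rewrite mxE; case: eqP => [//|/eqP ji]; apply: yk.
  by rewrite ltn_neqAle kj andbT; apply: contraNneq ji => kj'; apply/eqP/val_inj.
have n1 : `|1 : R| = 1 by rewrite normr1.
have nN1 : `|-1 : R| = 1 by rewrite normrN normr1.
rewrite (row_set_convex x y i).
rewrite (_ : U = (1 + y 0 i) / 2 * U + (1 - (1 + y 0 i) / 2) * U); last by ring.
apply: convex_fun_le; [lra | lra | apply: IH | apply: IH];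
  first [exact: set_box n1 | exact: set_box nN1
        | exact: set_vertex n1 | exact: set_vertex nN1].
Qed.

Section local_bounds.
Context {x : 'rV[R]_d} {U : R} (fU : forall y : 'rV[R]_d, `|y| <= 1 -> f (x + y) <= U).

Lemma convex_fun_local_ub z : `|z - x| <= 1 -> f z - f x <= `|z - x| * (U - f x).
Proof.
move=> zx1; have [zx0|zx_neq0] := eqVneq (z - x) 0.
  by rewrite zx0 normr0 mul0r subr_le0; move/eqP: zx0; rewrite subr_eq0 => /eqP->.
set r := `|z - x|; have r_gt0 : 0 < r by rewrite normr_gt0.
have -> : z = r *: (x + r^-1 *: (z - x)) + (1 - r) *: x.
  by apply/matrixP => i j; rewrite !mxE; field; rewrite gt_eqF.
have w1 : `|r^-1 *: (z - x)| <= 1 by rewrite normfZV.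
have := convex_fun_le (ltW r_gt0) zx1 (fU _ w1) (lexx (f x)); lra.
Qed.

Lemma convex_fun_local_lb z : `|z - x| <= 1 -> f x - f z <= `|z - x| * (U - f x).
Proof.
move=> zx1; have [zx0|zx_neq0] := eqVneq (z - x) 0.
  by rewrite zx0 normr0 mul0r subr_le0; move/eqP: zx0; rewrite subr_eq0 => /eqP->.
set r := `|z - x|; have r_gt0 : 0 < r by rewrite normr_gt0.
have r1_gt0 : 0 < 1 + r by lra.
have s0 : 0 <= (1 + r)^-1 by rewrite invr_ge0 ltW.
have s1 : (1 + r)^-1 <= 1 by rewrite invf_le1 //; lra.
have w1 : `|- (r^-1 *: (z - x))| <= 1 by rewrite normrN normfZV.
have := convex_fun_le s0 s1 (lexx (f z)) (fU _ w1).
have -> : (1 + r)^-1 *: z + (1 - (1 + r)^-1) *: (x + - (r^-1 *: (z - x))) = x.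
  by apply/matrixP => i j; rewrite !mxE; field; rewrite !gt_eqF.
move=> /(ler_wpM2l (ltW r1_gt0)).
have -> : (1 + r) * ((1 + r)^-1 * f z + (1 - (1 + r)^-1) * U) = f z + r * U.
  by field; rewrite gt_eqF.
lra.
Qed.

End local_bounds.

Lemma convex_fun_continuous : continuous f.
Proof.
move=> x; have [U fU] := convex_fun_cube_bounded x.
have ballU y : `|y| <= 1 -> f (x + y) <= U.
  by move=> y1; apply: fU => i; exact: le_trans (mx_norm_coord_le y 0 i) y1.
have fxU : f x <= U by rewrite -[x]addr0; apply: ballU; rewrite normr0.
apply: (@lipschitz_near_continuous _ _ _ _ (U - f x + 1)); first lra.
have : \forall z \near x, `|x - z| < 1 by exact: (nbhs_ball_norm x (PosNum ltr01)).
apply: filterS => z xz; have zx1 : `|z - x| <= 1 by rewrite distrC ltW.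
have ub := convex_fun_local_ub ballU _ zx1.
have lb := convex_fun_local_lb ballU _ zx1.
have := normr_ge0 (z - x).
by rewrite (distrC x z) ler_norml => ?; apply/andP; split; nra.
Qed.

End convex_fun_rV.

Definition midpoint_strongly_convex {R : realType} {d : nat}
    (N G : 'rV[R]_d -> R) (k : R) :=
  forall p q, k * N (p - q) ^+ 2 + 2 * G (2^-1 *: (p + q)) <= G p + G q.

Section bregman_rV.
Context {R : realType} {d : nat} {Phi : 'rV[R]_d -> R}.
Context (Phi_diff : forall x : 'rV[R]_d, differentiable Phi x).

Lemma bregmanE (x y : 'rV[R]_d) : bregman Phi y x = Phi y - Phi x - 'd Phi x (y - x).
Proof. by rewrite /bregman deriveE. Qed.

(* Comparing differentials of [Phi] at two different points makes tactics unfold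
   [diff]; an abstract linear gradient avoids this. *)
Lemma bregman_linear_gradient : exists D : 'rV[R]_d -> {linear 'rV[R]_d -> R},
  forall x y, bregman Phi y x = Phi y - Phi x - D x (y - x).
Proof. by exists (fun x => 'd Phi x) => x y; rewrite bregmanE. Qed.

Lemma bregman_continuous (x : 'rV[R]_d) : continuous (bregman Phi ^~ x).
Proof.
have -> : bregman Phi ^~ x = fun y => Phi y - Phi x - ('d Phi x y - 'd Phi x x).
  by apply/funext => y; rewrite bregmanE linearB.
have dPhi_cont : continuous ('d Phi x) := diff_continuous (Phi_diff x).
move=> y; have Phi_y := differentiable_continuous (Phi_diff y).
exact: cvgB (cvgB Phi_y (cvg_cst _)) (cvgB (dPhi_cont y) (cvg_cst _)).
Qed.

Lemma bregman_convex (x : 'rV[R]_d) : convex_fun Phi -> convex_fun (bregman Phi ^~ x).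
Proof.
move=> Phi_convex a b t t0 t1; have [D DE] := bregman_linear_gradient; rewrite !DE.
have -> : t *: a + (1 - t) *: b - x = t *: (a - x) + (1 - t) *: (b - x).
  by apply/matrixP => i j; rewrite !mxE; ring.
rewrite linearD !scalarZ; have := Phi_convex a b t t0 t1; lra.
Qed.

Lemma bregman_midpoint_strongly_convex {N : 'rV[R]_d -> R} {k : R} (x : 'rV[R]_d) :
  is_norm N -> (forall y z, k * N (y - z) ^+ 2 <= bregman Phi y z) ->
  midpoint_strongly_convex N (bregman Phi ^~ x) (k / 2).
Proof.
move=> normN Phi_lb p q; pose z := 2^-1 *: (p + q).
have half_ge0 : (0 : R) <= 2^-1 by rewrite invr_ge0.
have Npz : N (p - z) = 2^-1 * N (p - q).
  have -> : p - z = 2^-1 *: (p - q) by apply/matrixP => i j; rewrite !mxE; field.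
  by rewrite (is_normZ normN) ger0_norm.
have Nqz : N (q - z) = 2^-1 * N (p - q).
  have -> : q - z = - 2^-1 *: (p - q) by apply/matrixP => i j; rewrite !mxE; field.
  by rewrite (is_normZ normN) normrN ger0_norm.
have [D DE] := bregman_linear_gradient.
have Dz : D z (p - z) + D z (q - z) = 0.
  rewrite -linearD (_ : p - z + (q - z) = 0) ?linear0 //.
  by apply/matrixP => i j; rewrite !mxE; field.
have Dx : D x (p - x) + D x (q - x) = D x (z - x) + D x (z - x).
  rewrite -!linearD; congr (D x _).
  by apply/matrixP => i j; rewrite !mxE; field.
have := Phi_lb p z; have := Phi_lb q z; rewrite !DE Npz Nqz.
have -> : k * (2^-1 * N (p - q)) ^+ 2 = k / 2 * N (p - q) ^+ 2 / 2 by field.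
lra.
Qed.

End bregman_rV.

Definition is_argmin {R : realType} {d : nat} (G : 'rV[R]_d -> R)
    (K : set 'rV[R]_d) (p : 'rV[R]_d) : Prop :=
  K p /\ forall y, K y -> G p <= G y.

Definition argmin {R : realType} {d : nat} (G : 'rV[R]_d -> R)
    (K : set 'rV[R]_d) : 'rV[R]_d :=
  xget 0 [set p | is_argmin G K p].

Lemma argminP {R : realType} {d : nat} {G : 'rV[R]_d -> R} {K : set 'rV[R]_d} :
  continuous G -> (forall c, compact [set y | G y <= c]) ->
  closed K -> K !=set0 -> is_argmin G K (argmin G K).
Proof.
move=> G_cont G_compact K_closed [y0 Ky0]; apply: xgetPex.
pose S := K `&` [set y | G y <= G y0].
have S_compact : compact S by rewrite /S setIC; exact: compact_closedI.
have [q /set_mem [Kq Gq] minq] :=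
  EVT_min_rV (ex_intro _ y0 (conj Ky0 (lexx _))) S_compact
    (continuous_subspaceT G_cont).
exists q; split => // y Ky; have [Gy|/ltW Gy] := leP (G y) (G y0).
  by apply: minq; exact: mem_set.
exact: le_trans Gq Gy.
Qed.

Lemma argmin_growth {R : realType} {d : nat} {N G : 'rV[R]_d -> R} {k : R}
    {K : set 'rV[R]_d} {q y : 'rV[R]_d} :
  midpoint_strongly_convex N G k -> is_argmin G K q ->
  K y -> K (2^-1 *: (y + q)) -> k * N (y - q) ^+ 2 <= G y - G q.
Proof. by move=> G_msc [_ minq] _ /minq; have := G_msc y q; lra. Qed.

Section argmin_sublevel.
Context {R : realType} {d : nat} {N G f : 'rV[R]_d -> R} {k : R}.
Context (normN : is_norm N) (k_gt0 : 0 < k).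
Context (G_cont : continuous G) (G_convex : convex_fun G).
Context (G_msc : midpoint_strongly_convex N G k).
Context (G_compact : forall c, compact [set y | G y <= c]).
Context (f_convex : convex_fun f).

Let f_cont : continuous f := convex_fun_continuous f_convex.

Local Notation minimizer l := (argmin G (sublevel f l)).
Local Notation minimum l := (G (minimizer l)).

Lemma sublevel_argminP {l} :
  sublevel f l !=set0 -> is_argmin G (sublevel f l) (minimizer l).
Proof. exact: argminP G_cont G_compact (sublevel_closed l f_cont). Qed.

Lemma sublevel_nonempty_le {l l'} :
  sublevel f l !=set0 -> l <= l' -> sublevel f l' !=set0.
Proof. by move=> [y fy] ll'; exists y; exact: le_trans fy ll'. Qed.

Lemma sublevel_minimizer_sq_dist_le {l l'} : sublevel f l !=set0 -> l <= l' ->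
  k * N (minimizer l - minimizer l') ^+ 2 <= minimum l - minimum l'.
Proof.
move=> Kl ll'; have [fpl _] := sublevel_argminP Kl.
have fpl_le : f (minimizer l) <= l' := le_trans fpl ll'.
have min_l' := sublevel_argminP (sublevel_nonempty_le Kl ll').
apply: (argmin_growth G_msc min_l' fpl_le).
by have := convex_fun_midpoint_le f_convex fpl_le min_l'.1; rewrite /sublevel.
Qed.

Lemma sublevel_minimum_convex {l1 l2 t} :
  sublevel f l1 !=set0 -> sublevel f l2 !=set0 -> 0 <= t -> t <= 1 ->
  minimum (t * l1 + (1 - t) * l2) <= t * minimum l1 + (1 - t) * minimum l2.
Proof.
move=> K1 K2 t0 t1.
have fw := convex_fun_le f_convex t0 t1 (sublevel_argminP K1).1 (sublevel_argminP K2).1.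
have Kl : sublevel f (t * l1 + (1 - t) * l2) !=set0.
  by exists (t *: minimizer l1 + (1 - t) *: minimizer l2).
exact: le_trans ((sublevel_argminP Kl).2 _ fw) (G_convex _ _ _ t0 t1).
Qed.

Lemma sublevel_minimum_left_continuous {l0 eta} : sublevel f l0 !=set0 -> 0 < eta ->
  exists2 delta, 0 < delta & forall l, sublevel f l !=set0 ->
    l0 - delta < l -> l <= l0 -> minimum l <= minimum l0 + eta.
Proof.
move=> K0 eta_gt0.
have [[l1 [K1 l10]]|no_l1] :=
  pselect (exists l1, sublevel f l1 !=set0 /\ l1 < l0); last first.
  exists 1 => // l Kl _; rewrite le_eqVlt => /orP[/eqP->|ll0]; first lra.
  by exfalso; apply: no_l1; exists l.
pose S := (minimum l1 - minimum l0) / (l0 - l1).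
have S1_gt0 : 0 < `|S| + 1 by rewrite ltr_wpDl.
exists (Num.min (l0 - l1) (eta / (`|S| + 1))).
  by rewrite lt_min subr_gt0 l10 divr_gt0.
move=> l Kl l0l ll0; have : l0 - l < Num.min (l0 - l1) (eta / (`|S| + 1)) by lra.
rewrite lt_min => /andP[l1l lS].
pose t := (l0 - l) / (l0 - l1).
have l01_gt0 : 0 < l0 - l1 by rewrite subr_gt0.
have t0 : 0 <= t by rewrite divr_ge0 // ?subr_ge0 // ltW.
have t1 : t <= 1 by rewrite ler_pdivrMr // mul1r; lra.
have := sublevel_minimum_convex K1 K0 t0 t1.
rewrite (_ : t * l1 + (1 - t) * l0 = l); last by rewrite /t; field; rewrite gt_eqF.
have -> : t * minimum l1 + (1 - t) * minimum l0 = minimum l0 + (l0 - l) * S.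
  by rewrite /t /S; field; rewrite gt_eqF.
have : (l0 - l) * (`|S| + 1) <= eta by rewrite -ler_pdivlMr // ltW.
have := ler_norm S; nra.
Qed.

Lemma sublevel_minimum_right_continuous {l0 eta} : sublevel f l0 !=set0 -> 0 < eta ->
  exists2 delta, 0 < delta & forall l, l0 <= l -> l < l0 + delta ->
    minimum l0 - eta <= minimum l.
Proof.
move=> K0 eta_gt0; pose C := [set y | G y <= minimum l0 - eta].
have [[y Cy]|C0] := pselect (C !=set0); last first.
  exists 1 => // l l0l _; rewrite leNgt; apply/negP => /ltW Cpl.
  by apply: C0; exists (minimizer l).
have [z /set_mem Cz minz] :=
  EVT_min_rV (ex_intro _ y Cy) (G_compact _) (continuous_subspaceT f_cont).
have l0z : l0 < f z.
  rewrite ltNge; apply/negP => fz; have := (sublevel_argminP K0).2 _ fz.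
  by move: Cz; rewrite /C /=; lra.
exists (f z - l0); first by rewrite subr_gt0.
move=> l l0l lz; rewrite leNgt; apply/negP => /ltW Cpl.
have fpl := (sublevel_argminP (sublevel_nonempty_le K0 l0l)).1.
have := minz _ (mem_set Cpl); rewrite /sublevel /= in fpl; lra.
Qed.

Lemma sublevel_minimizer_continuous {l0 e} : sublevel f l0 !=set0 -> 0 < e ->
  exists2 delta, 0 < delta & forall l, sublevel f l !=set0 ->
    `|l - l0| < delta -> N (minimizer l - minimizer l0) <= e.
Proof.
move=> K0 e_gt0; have eta_gt0 : 0 < k * e ^+ 2 by rewrite mulr_gt0 ?exprn_gt0.
have [dL dL_gt0 left] := sublevel_minimum_left_continuous K0 eta_gt0.
have [dR dR_gt0 right] := sublevel_minimum_right_continuous K0 eta_gt0.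
exists (Num.min dL dR); first by rewrite lt_min dL_gt0.
move=> l Kl; rewrite lt_min !ltr_norml => /andP[/andP[lL _] /andP[_ lR]].
suff : k * N (minimizer l - minimizer l0) ^+ 2 <= k * e ^+ 2.
  by rewrite ler_pM2l // ler_sqr ?nnegrE ?(is_norm_ge0 normN) // ltW.
have [l0l|ll0] := leP l0 l.
  rewrite (is_normB normN); apply: le_trans (sublevel_minimizer_sq_dist_le K0 l0l) _.
  by have := right l l0l; lra.
apply: le_trans (sublevel_minimizer_sq_dist_le Kl (ltW ll0)) _.
by have := left l Kl; lra.
Qed.

Lemma sublevel_minimizer_dist_continuous x :
  {within [set l | sublevel f l !=set0], continuous (fun l => N (minimizer l - x))}.
Proof.
apply: within_continuous_eps_delta => l0 K0 e e_gt0.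
have [delta delta_gt0 near_l0] := sublevel_minimizer_continuous K0 e_gt0.
exists delta => // l Kl ll0; apply: le_trans (is_norm_dist normN _ _) _.
by rewrite opprB addrA subrK; exact: near_l0.
Qed.

End argmin_sublevel.

Theorem lemma4 (R : realType) (d : nat) (N : 'rV[R]_d -> R)
    (Phi : 'rV[R]_d -> R) (m M : R) (f : 'rV[R]_d -> R) (x0 : 'rV[R]_d) :
  is_norm N ->
  (forall x : 'rV[R]_d, differentiable Phi x) ->
  convex_fun Phi ->
  0 < m -> m <= M ->
  (forall x y : 'rV[R]_d,
      m / 2 * N (x - y) ^+ 2 <= bregman Phi x y /\
      bregman Phi x y <= M / 2 * N (x - y) ^+ 2) ->
  convex_fun f ->
  {within [set l : R | sublevel f l !=set0],
    continuous (fun l : R => N (bregman_proj Phi (sublevel f l) x0 - x0))}.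
Proof.
move=> normN Phi_diff Phi_convex m_gt0 _ Phi_bounds f_convex.
have m2_gt0 : 0 < m / 2 by rewrite divr_gt0.
have Phi_lb x y : m / 2 * N (x - y) ^+ 2 <= bregman Phi x y := (Phi_bounds x y).1.
have G_cont := bregman_continuous Phi_diff x0.
(* [bregman_proj Phi K x0] unfolds to [argmin (bregman Phi ^~ x0) K]. *)
apply: (sublevel_minimizer_dist_continuous normN _ G_cont
  (bregman_convex Phi_diff x0 Phi_convex)
  (bregman_midpoint_strongly_convex Phi_diff x0 normN Phi_lb)
  (quadratic_growth_sublevel_compact normN m2_gt0 G_cont (fun y => Phi_lb y x0))
  f_convex).
by rewrite divr_gt0.
Qed.
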